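(* Let $N=\{1,\dots,n\}$, $n\ge 2$, be a parallel-link network with unit demand and latencies $\ell_i\in\mathcal{L}_c$. Let $c\in\mathbb{R}_+\cup\{\infty\}$ and $t\in\mathcal{T}(c)$. If $x_i(t)>0$ for all $i\in N$, then for all $i\in N$, $$t_i=\min\left\{\left(\ell'_i(x_i(t))+\frac{1}{\sum_{j\neq i}\frac{1}{\ell'_j(x_j(t))}}\right)\cdot x_i(t),\;c\right\},$$ where $\min\{s,\infty\}=s$.
   Context: $\mathcal{L}_c$: strictly increasing, convex, continuously differentiable functions $\mathbb{R}_+\to\mathbb{R}_+$. Parallel links $N$, one unit of flow; flows $x\in\mathbb{R}^N_+$ with $\sum_ix_i=1$. For tolls $t\in\mathbb{R}^N_+$, $x(t)$ is the unique Wardrop equilibrium for $t$: for all $i,j$ with $x_i>0$, $\ell_i(x_i)+t_i\le \ell_j(x_j)+t_j$. Profit $\Pi_i(t)=t_ix_i(t)$. For $c\in\mathbb{R}_+$, $\mathcal{T}(c)$ is the set of toll vectors $t$ with $0\le t_i\le c$ for all $i$ such that for every $i$ and every $t'_i\in[0,c]$, $\Pi_i(t_i,t_{-i})\ge\Pi_i(t'_i,t_{-i})$ (flow recomputed); $\mathcal{T}(\infty)$ is defined the same way with no upper bound on tolls (uncapped subgame perfect Nash equilibria). *)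

From Stdlib Require Import Reals Lra.
Open Scope R_scope.

Fixpoint sumR (n : nat) (f : nat -> R) : R :=
  match n with O => 0 | S k => sumR k f + f k end.

Definition right_deriv_at0 (f : R -> R) (d : R) : Prop :=
  forall eps, 0 < eps -> exists delta, 0 < delta /\
    forall h, 0 < h -> h < delta -> Rabs ((f h - f 0) / h - d) < eps.

(* The class L_c: f : R_+ -> R_+ strictly increasing, convex, continuously
   differentiable on R_+ (one-sided at 0), with derivative df. Only the
   values of f, df on [0, +oo) matter. *)
Definition in_Lc (f df : R -> R) : Prop :=
  (forall x, 0 <= x -> 0 <= f x) /\
  (forall x y, 0 <= x -> x < y -> f x < f y) /\
  (forall x y a, 0 <= x -> 0 <= y -> 0 <= a -> a <= 1 ->
      f (a * x + (1 - a) * y) <= a * f x + (1 - a) * f y) /\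
  (forall x, 0 < x -> derivable_pt_lim f x (df x)) /\
  right_deriv_at0 f (df 0) /\
  (forall x, 0 <= x -> forall eps, 0 < eps -> exists delta, 0 < delta /\
      forall y, 0 <= y -> Rabs (y - x) < delta -> Rabs (df y - df x) < eps).

Definition wardrop (n : nat) (l : nat -> R -> R) (t x : nat -> R) : Prop :=
  (forall i, (i < n)%nat -> 0 <= x i) /\
  sumR n x = 1 /\
  (forall i j, (i < n)%nat -> (j < n)%nat -> 0 < x i ->
      l i (x i) + t i <= l j (x j) + t j).

(* Cap c in R_+ u {oo}: None = oo. *)
Definition below_cap (c : option R) (v : R) : Prop :=
  match c with Some c0 => v <= c0 | None => True end.

Definition min_cap (s : R) (c : option R) : R :=
  match c with Some c0 => Rmin s c0 | None => s end.

Definition upd (t : nat -> R) (i : nat) (ti : R) : nat -> R :=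
  fun j => if Nat.eq_dec j i then ti else t j.

(* Since the
   equilibrium flow x(t) is unique, profits are expressed via any
   Wardrop equilibrium flow. *)
Definition in_T (n : nat) (l : nat -> R -> R) (c : option R) (t : nat -> R) : Prop :=
  (forall i, (i < n)%nat -> 0 <= t i /\ below_cap c (t i)) /\
  (forall i t', (i < n)%nat -> 0 <= t' -> below_cap c t' ->
     forall x x', wardrop n l t x -> wardrop n l (upd t i t') x' ->
       t' * x' i <= t i * x i).

(* Fix operator [i]. All links are used, so they share a common cost level [L].
   By changing its toll, [i] can move this level to any nearby [lam]: link [j <> i]
   then carries [l_j^-1 (lam - t_j)], link [i] the remaining flow [y(lam)], and [i]'s
   toll is [lam - l_i (y(lam))]. By the inverse function theorem the toll and the
   profit are differentiable in [lam], and at [L] the profit has derivative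
   [(sum_(j <> i) 1 / l'_j (x_j)) * (F - t_i)], where [F] is the claimed formula,
   while the toll has positive derivative. Raising the level is an admissible
   deviation unless [t_i = c], so [F <= t_i] then; lowering it is admissible
   whenever [t_i > 0], so [t_i <= F]. *)

From Stdlib Require Import Reals Lra Lia Ranalysis5 ClassicalEpsilon.
Open Scope R_scope.

Definition near0 (P : R -> Prop) : Prop :=
  exists del, 0 < del /\ forall h, h <> 0 -> Rabs h < del -> P h.

Lemma near0_abs_lt r : 0 < r -> near0 (fun h => Rabs h < r).
Proof. intros Hr. exists r; split; auto. Qed.

Lemma near0_impl (P Q : R -> Prop) :
  (forall h, P h -> Q h) -> near0 P -> near0 Q.
Proof. intros HPQ [d [Hd HP]]. exists d; split; auto. Qed.

Lemma near0_and (P Q : R -> Prop) :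
  near0 P -> near0 Q -> near0 (fun h => P h /\ Q h).
Proof.
  intros [d1 [Hd1 HP]] [d2 [Hd2 HQ]]. exists (Rmin d1 d2); split.
  - now apply Rmin_glb_lt.
  - intros h Hh Hlt. apply Rmin_Rgt_l in Hlt as [H1 H2]. split; auto.
Qed.

Lemma near0_forall_lt (n : nat) (Q : nat -> R -> Prop) :
  (forall j, (j < n)%nat -> near0 (Q j)) ->
  near0 (fun h => forall j, (j < n)%nat -> Q j h).
Proof.
  induction n as [|n IH]; intros HQ.
  - exists 1; split; [lra | intros; lia].
  - apply (near0_impl (fun h => (forall j, (j < n)%nat -> Q j h) /\ Q n h)).
    + intros h [Hlt Hn] j Hj. destruct (Nat.eq_dec j n) as [->|]; auto with arith.
      apply Hlt; lia.
    + apply near0_and; [apply IH; auto | apply HQ]; lia.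
Qed.

Lemma near0_pos (P : R -> Prop) : near0 P -> exists h, 0 < h /\ P h.
Proof.
  intros [d [Hd HP]]. exists (d / 2); split; [lra|].
  apply HP; [lra | rewrite Rabs_right; lra].
Qed.

Lemma near0_neg (P : R -> Prop) : near0 P -> exists h, h < 0 /\ P h.
Proof.
  intros [d [Hd HP]]. exists (- (d / 2)); split; [lra|].
  apply HP; [lra | rewrite Rabs_left; lra].
Qed.

Lemma derivable_pt_lim_near0 f x d eps :
  derivable_pt_lim f x d -> 0 < eps ->
  near0 (fun h => Rabs ((f (x + h) - f x) / h - d) < eps).
Proof.
  intros Hf Heps. destruct (Hf eps Heps) as [[del Hdel] Hq].
  exists del; split; auto.
Qed.

Lemma derivable_pt_lim_near0_close f x d eps :
  derivable_pt_lim f x d -> 0 < eps -> near0 (fun h => Rabs (f (x + h) - f x) < eps).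
Proof.
  intros Hf Heps. set (k := Rabs d + 1).
  assert (Hk : 0 < k) by (unfold k; pose proof (Rabs_pos d); lra).
  apply (near0_impl (fun h => Rabs ((f (x + h) - f x) / h - d) < 1 /\
                              Rabs h < eps / k)).
  - intros h [Hq Hh]. destruct (Req_dec h 0) as [->|Hh0].
    { rewrite Rplus_0_r, Rminus_diag, Rabs_R0; lra. }
    assert (Hfh : f (x + h) - f x = (f (x + h) - f x) / h * h) by (field; auto).
    assert (Hqk : Rabs ((f (x + h) - f x) / h) < k).
    { pose proof (Rabs_triang_inv ((f (x + h) - f x) / h) d). unfold k; lra. }
    rewrite Hfh, Rabs_mult.
    apply Rlt_le_trans with (k * (eps / k)); [|right; field; lra].
    apply Rle_lt_trans with (k * Rabs h).
    + apply Rmult_le_compat_r; [apply Rabs_pos | lra].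
    + apply Rmult_lt_compat_l; auto.
  - apply near0_and; [apply derivable_pt_lim_near0; auto; lra|].
    apply near0_abs_lt, Rdiv_lt_0_compat; auto.
Qed.

Lemma derivable_pt_lim_near0_sign f x d :
  derivable_pt_lim f x d -> d <> 0 ->
  near0 (fun h => (0 < d * h -> f x < f (x + h)) /\ (d * h < 0 -> f (x + h) < f x)).
Proof.
  intros Hf Hd.
  apply (near0_impl (fun h => h <> 0 /\ Rabs ((f (x + h) - f x) / h - d) < Rabs d)).
  - intros h [Hh0 Hq]. set (q := (f (x + h) - f x) / h) in Hq.
    assert (Hfq : f (x + h) - f x = q * h) by (unfold q; field; auto).
    (* [q] is within [|d|] of [d], hence has the sign of [d] *)
    apply Rabs_def2 in Hq.
    destruct (Rle_or_lt 0 d); [rewrite Rabs_right in Hq | rewrite Rabs_left in Hq];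
      try lra; split; intros; nra.
  - apply near0_and; [exists 1; split; [lra | auto]|].
    apply derivable_pt_lim_near0; auto. now apply Rabs_pos_lt.
Qed.

Lemma convex_increasing_deriv_pos (f : R -> R) x0 d :
  (forall a b, 0 <= a -> a < b -> f a < f b) ->
  (forall a b s, 0 <= a -> 0 <= b -> 0 <= s -> s <= 1 ->
     f (s * a + (1 - s) * b) <= s * f a + (1 - s) * f b) ->
  0 < x0 -> derivable_pt_lim f x0 d -> 0 < d.
Proof.
  intros Hincr Hconv Hx0 Hf.
  (* left difference quotients dominate the slope [s] of the chord over [x0/2, x0] *)
  set (s := 2 * (f x0 - f (x0 / 2)) / x0).
  assert (Hs : 0 < s).
  { unfold s. apply Rdiv_lt_0_compat; auto. assert (f (x0 / 2) < f x0) by (apply Hincr; lra).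
    lra. }
  destruct (near0_neg _ (near0_and _ _ (derivable_pt_lim_near0 f x0 d s Hf Hs)
                            (near0_abs_lt (x0 / 2) ltac:(lra))))
    as [h [Hh [Hq Hhx]]].
  rewrite Rabs_left in Hhx by auto.
  set (a := - h / (x0 / 2)).
  assert (Hax : a * (x0 / 2) = - h) by (unfold a; field; lra).
  assert (Ha : 0 < a < 1) by (split; nra).
  pose proof (Hconv (x0 / 2) x0 a ltac:(lra) ltac:(lra) ltac:(lra) ltac:(lra)) as Hc.
  replace (a * (x0 / 2) + (1 - a) * x0) with (x0 + h) in Hc by lra.
  assert (Hsa : a * (f (x0 / 2) - f x0) = s * h) by (unfold s, a; field; lra).
  assert (Hsq : s <= (f (x0 + h) - f x0) / h).
  { set (Q := (f (x0 + h) - f x0) / h).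
    assert (Q * h = f (x0 + h) - f x0) by (unfold Q; field; lra). nra. }
  apply Rabs_def2 in Hq. lra.
Qed.

(* Junk value [0] when [m] has no positive preimage. *)
Definition finv (f : R -> R) (m : R) : R :=
  epsilon (inhabits 0) (fun y => 0 < y /\ f y = m).

Section PositiveInverse.

Variables f df : R -> R.
Hypothesis f_incr : forall a b, 0 <= a -> a < b -> f a < f b.
Hypothesis f_deriv : forall y, 0 < y -> derivable_pt_lim f y (df y).

Lemma continuity_pt_pos y : 0 < y -> continuity_pt f y.
Proof. intros Hy. exact (derivable_continuous_pt f y (exist _ (df y) (f_deriv y Hy))). Qed.

Lemma finv_f y : 0 < y -> finv f (f y) = y.
Proof.
  intros Hy. unfold finv.
  destruct (epsilon_spec (inhabits 0) (fun z => 0 < z /\ f z = f y)) as [Hz Hfz];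
    [now exists y|].
  set (z := epsilon _ _) in *.
  destruct (Rtotal_order z y) as [Hlt|[Heq|Hgt]]; auto.
  - pose proof (f_incr z y ltac:(lra) Hlt). lra.
  - pose proof (f_incr y z ltac:(lra) Hgt). lra.
Qed.

Lemma finv_between a b m :
  0 < a -> a < b -> f a <= m <= f b -> a <= finv f m <= b /\ f (finv f m) = m.
Proof.
  intros Ha Hab Hm.
  destruct (f_interv_is_interv f a b m Hab Hm) as [y [Hy Hfy]].
  { intros y Hy. apply continuity_pt_pos. lra. }
  subst m. rewrite finv_f by lra. auto.
Qed.

Variable x0 : R.
Hypothesis x0_pos : 0 < x0.

Lemma finv_near0 :
  near0 (fun h => 0 < finv f (f x0 + h) /\ f (finv f (f x0 + h)) = f x0 + h).
Proof.
  assert (Hlo : f (x0 / 2) < f x0) by (apply f_incr; lra).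
  assert (Hhi : f x0 < f (2 * x0)) by (apply f_incr; lra).
  apply (near0_impl (fun h => Rabs h < Rmin (f x0 - f (x0 / 2)) (f (2 * x0) - f x0))).
  - intros h Hh. apply Rmin_Rgt_l in Hh as [H1 H2].
    apply Rabs_def2 in H1. apply Rabs_def2 in H2.
    destruct (finv_between (x0 / 2) (2 * x0) (f x0 + h)) as [Hb Hf]; [lra..|].
    split; [lra | exact Hf].
  - apply near0_abs_lt, Rmin_glb_lt; lra.
Qed.

Lemma derivable_pt_lim_finv :
  df x0 <> 0 -> derivable_pt_lim (finv f) (f x0) (/ df x0).
Proof.
  intros Hd.
  set (lb := f (x0 / 2)). set (ub := f (2 * x0)).
  assert (Hlo : lb < f x0) by (unfold lb; apply f_incr; lra).
  assert (Hhi : f x0 < ub) by (unfold ub; apply f_incr; lra).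
  assert (Hbetween : forall m, lb <= m <= ub ->
            x0 / 2 <= finv f m <= 2 * x0 /\ f (finv f m) = m)
    by (intros; apply finv_between; unfold lb, ub in *; lra).
  assert (Hcomp : forall m, lb <= m <= ub -> comp f (finv f) m = id m)
    by (intros m Hm; apply Hbetween; auto).
  assert (Hcont : continuity_pt (finv f) (f x0)).
  { apply (continuity_pt_recip_interv f (finv f) (x0 / 2) (2 * x0)); [lra | | | | | ].
    - intros; apply f_incr; lra.
    - intros m H1 H2. apply Hcomp. unfold lb, ub. lra.
    - intros m H1 H2. apply Hbetween. unfold lb, ub. lra.
    - intros a Ha. apply continuity_pt_pos. lra.
    - unfold lb, ub in *. lra. }
  assert (Hlb : finv f lb = x0 / 2) by (apply finv_f; lra).
  assert (Hub : finv f ub = 2 * x0) by (apply finv_f; lra).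
  assert (Hx0 : finv f (f x0) = x0) by (apply finv_f; lra).
  assert (Prf : forall a, finv f lb <= a <= finv f ub -> derivable_pt f a).
  { intros a Ha. exists (df a). apply f_deriv. lra. }
  assert (Hmid : finv f lb <= finv f (f x0) <= finv f ub) by lra.
  pose proof (derivable_pt_lim_recip_interv f (finv f) lb ub (f x0) Prf Hcont
                ltac:(lra) ltac:(lra) Hmid Hcomp) as Hrecip.
  assert (Hdf : derive_pt f (finv f (f x0)) (Prf _ Hmid) = df x0).
  { apply derive_pt_eq_0. rewrite Hx0. auto. }
  rewrite Hdf in Hrecip. replace (/ df x0) with (1 / df x0) by (field; auto).
  now apply Hrecip.
Qed.

End PositiveInverse.

Definition sumR_except (n i : nat) (g : nat -> R) : R :=
  sumR n (fun j => if Nat.eq_dec j i then 0 else g j).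

Lemma sumR_ext n f g : (forall j, (j < n)%nat -> f j = g j) -> sumR n f = sumR n g.
Proof.
  induction n as [|n IH]; intros Hfg; simpl; auto.
  rewrite (Hfg n) by lia. rewrite IH by (intros; apply Hfg; lia). reflexivity.
Qed.

Lemma sumR_except_ext n i f g :
  (forall j, (j < n)%nat -> j <> i -> f j = g j) -> sumR_except n i f = sumR_except n i g.
Proof.
  intros Hfg. apply sumR_ext. intros j Hj. destruct (Nat.eq_dec j i); auto.
Qed.

Lemma sumR_pick n g i : (i < n)%nat -> sumR n g = g i + sumR_except n i g.
Proof.
  unfold sumR_except. induction n as [|n IH]; intros Hi; [lia|]. simpl.
  destruct (Nat.eq_dec n i) as [->|Hne].
  - rewrite (sumR_ext i (fun j => if Nat.eq_dec j i then 0 else g j) g).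
    + destruct (Nat.eq_dec i i); [lra | lia].
    + intros j Hj. destruct (Nat.eq_dec j i); [lia | auto].
  - rewrite IH by lia. destruct (Nat.eq_dec n i); [lia | lra].
Qed.

Lemma sumR_nonneg n f : (forall j, (j < n)%nat -> 0 <= f j) -> 0 <= sumR n f.
Proof.
  induction n as [|n IH]; intros Hf; simpl; [lra|].
  assert (0 <= sumR n f) by (apply IH; intros; apply Hf; lia).
  assert (0 <= f n) by (apply Hf; lia). lra.
Qed.

Lemma sumR_pos n f k :
  (forall j, (j < n)%nat -> 0 <= f j) -> (k < n)%nat -> 0 < f k -> 0 < sumR n f.
Proof.
  intros Hf Hk Hfk. rewrite (sumR_pick n f k Hk).
  assert (0 <= sumR_except n k f); [|lra].
  apply sumR_nonneg. intros j Hj. destruct (Nat.eq_dec j k); [lra | auto].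
Qed.

Lemma derivable_pt_lim_sumR n (g : nat -> R -> R) (d : nat -> R) x :
  (forall j, (j < n)%nat -> derivable_pt_lim (g j) x (d j)) ->
  derivable_pt_lim (fun y => sumR n (fun j => g j y)) x (sumR n d).
Proof.
  induction n as [|n IH]; intros Hg; simpl.
  - apply derivable_pt_lim_const.
  - apply (derivable_pt_lim_plus (fun y => sumR n (fun j => g j y)) (g n)).
    + apply IH. intros; apply Hg; lia.
    + apply Hg; lia.
Qed.

Lemma below_cap_le c u v : u <= v -> below_cap c v -> below_cap c u.
Proof. destruct c; simpl; auto. lra. Qed.

Section Deviation.

Variables (n : nat) (l dl : nat -> R -> R) (c : option R) (t x : nat -> R) (i : nat).
Hypothesis two_le_n : (2 <= n)%nat.
Hypothesis l_Lc : forall j, (j < n)%nat -> in_Lc (l j) (dl j).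
Hypothesis t_in_T : in_T n l c t.
Hypothesis x_wardrop : wardrop n l t x.
Hypothesis x_pos : forall j, (j < n)%nat -> 0 < x j.
Hypothesis i_lt_n : (i < n)%nat.

Lemma l_incr j : (j < n)%nat -> forall a b, 0 <= a -> a < b -> l j a < l j b.
Proof. intros Hj. apply (l_Lc j Hj). Qed.

Lemma l_deriv j : (j < n)%nat -> forall y, 0 < y -> derivable_pt_lim (l j) y (dl j y).
Proof. intros Hj. apply (l_Lc j Hj). Qed.

Lemma dl_pos j : (j < n)%nat -> 0 < dl j (x j).
Proof.
  intros Hj. destruct (l_Lc j Hj) as [_ [Hincr [Hconv [Hder _]]]].
  apply (convex_increasing_deriv_pos (l j) (x j)); auto.
Qed.

Definition cost_level : R := l i (x i) + t i.

Lemma cost_eq j : (j < n)%nat -> l j (x j) + t j = cost_level.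
Proof.
  intros Hj. destruct x_wardrop as [_ [_ Hcost]]. unfold cost_level.
  pose proof (Hcost i j i_lt_n Hj (x_pos i i_lt_n)).
  pose proof (Hcost j i Hj i_lt_n (x_pos j Hj)). lra.
Qed.

(* Deviations of operator [i] are parametrised by the cost level [lam] they induce. *)
Definition rival_flow (lam : R) (j : nat) : R := finv (l j) (lam - t j).

Definition own_flow (lam : R) : R := 1 - sumR_except n i (rival_flow lam).

Definition dev_toll (lam : R) : R := lam - l i (own_flow lam).

Definition dev_profit (lam : R) : R := dev_toll lam * own_flow lam.

Definition dev_flow (lam : R) (j : nat) : R :=
  if Nat.eq_dec j i then own_flow lam else rival_flow lam j.

Definition rival_response : R := sumR_except n i (fun j => / dl j (x j)).

Definition toll_formula : R := (dl i (x i) + / rival_response) * x i.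

Lemma rival_flow_level j : (j < n)%nat -> rival_flow cost_level j = x j.
Proof.
  intros Hj. unfold rival_flow. rewrite <- (cost_eq j Hj).
  replace (l j (x j) + t j - t j) with (l j (x j)) by ring.
  apply (finv_f (l j)); auto using l_incr.
Qed.

Lemma rival_flow_near0 :
  near0 (fun h => forall j, (j < n)%nat ->
    0 < rival_flow (cost_level + h) j /\
    l j (rival_flow (cost_level + h) j) = cost_level + h - t j).
Proof.
  apply near0_forall_lt. intros j Hj.
  unfold rival_flow. rewrite <- (cost_eq j Hj).
  apply (near0_impl (fun h => 0 < finv (l j) (l j (x j) + h) /\
                              l j (finv (l j) (l j (x j) + h)) = l j (x j) + h)).
  - intros h. replace (l j (x j) + t j + h - t j) with (l j (x j) + h) by ring. auto.
  - apply (finv_near0 _ (dl j)); auto using l_incr, l_deriv.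
Qed.

Lemma derivable_pt_lim_rival_flow j :
  (j < n)%nat -> derivable_pt_lim (fun lam => rival_flow lam j) cost_level (/ dl j (x j)).
Proof.
  intros Hj. replace (/ dl j (x j)) with (/ dl j (x j) * (1 - 0)) by ring.
  apply (derivable_pt_lim_comp (fun lam => lam - t j) (finv (l j))).
  - apply (derivable_pt_lim_minus id (fct_cte (t j))).
    + apply derivable_pt_lim_id.
    + apply derivable_pt_lim_const.
  - rewrite <- (cost_eq j Hj). replace (l j (x j) + t j - t j) with (l j (x j)) by ring.
    apply (derivable_pt_lim_finv _ (dl j)); auto using l_incr, l_deriv.
    apply Rgt_not_eq, dl_pos; auto.
Qed.

Lemma rival_response_pos : 0 < rival_response.
Proof.
  set (k := if Nat.eq_dec i 0 then 1%nat else 0%nat).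
  assert (Hk : (k < n)%nat /\ k <> i) by (unfold k; destruct (Nat.eq_dec i 0); lia).
  apply (sumR_pos _ _ k).
  - intros j Hj. destruct (Nat.eq_dec j i); [lra|].
    left; apply Rinv_0_lt_compat, dl_pos; auto.
  - apply Hk.
  - destruct (Nat.eq_dec k i); [lia|]. apply Rinv_0_lt_compat, dl_pos, Hk.
Qed.

Lemma own_flow_level : own_flow cost_level = x i.
Proof.
  destruct x_wardrop as [_ [Hsum _]].
  rewrite (sumR_pick n x i i_lt_n) in Hsum. unfold own_flow.
  rewrite (sumR_except_ext n i _ x); [lra|].
  intros j Hj _. apply rival_flow_level; auto.
Qed.

Lemma derivable_pt_lim_own_flow : derivable_pt_lim own_flow cost_level (- rival_response).
Proof.
  replace (- rival_response) with (0 - rival_response) by ring.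
  apply (derivable_pt_lim_minus (fct_cte 1)); [apply derivable_pt_lim_const|].
  apply (derivable_pt_lim_sumR n (fun j lam => if Nat.eq_dec j i then 0 else rival_flow lam j)).
  intros j Hj. destruct (Nat.eq_dec j i).
  - apply derivable_pt_lim_const.
  - apply derivable_pt_lim_rival_flow; auto.
Qed.

Lemma dev_toll_level : dev_toll cost_level = t i.
Proof. unfold dev_toll. rewrite own_flow_level. unfold cost_level. ring. Qed.

Lemma derivable_pt_lim_dev_toll :
  derivable_pt_lim dev_toll cost_level (1 + dl i (x i) * rival_response).
Proof.
  replace (1 + dl i (x i) * rival_response)
    with (1 - dl i (x i) * - rival_response) by ring.
  apply (derivable_pt_lim_minus id); [apply derivable_pt_lim_id|].
  apply (derivable_pt_lim_comp own_flow (l i)); [apply derivable_pt_lim_own_flow|].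
  rewrite own_flow_level. apply l_deriv; auto.
Qed.

Lemma derivable_pt_lim_dev_profit :
  derivable_pt_lim dev_profit cost_level (rival_response * (toll_formula - t i)).
Proof.
  pose proof rival_response_pos.
  replace (rival_response * (toll_formula - t i))
    with ((1 + dl i (x i) * rival_response) * own_flow cost_level
          + dev_toll cost_level * - rival_response)
    by (rewrite own_flow_level, dev_toll_level; unfold toll_formula; field; lra).
  apply (derivable_pt_lim_mult dev_toll own_flow).
  - apply derivable_pt_lim_dev_toll.
  - apply derivable_pt_lim_own_flow.
Qed.

Lemma toll_formula_pos : 0 < toll_formula.
Proof.
  unfold toll_formula. pose proof (dl_pos i i_lt_n).
  pose proof (Rinv_0_lt_compat _ rival_response_pos). pose proof (x_pos i i_lt_n). nra.
Qed.

Lemma wardrop_dev_flow lam :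
  (forall j, (j < n)%nat -> 0 < rival_flow lam j /\ l j (rival_flow lam j) = lam - t j) ->
  0 <= own_flow lam ->
  wardrop n l (upd t i (dev_toll lam)) (dev_flow lam).
Proof.
  intros Hrival Hown.
  assert (Hcost : forall j, (j < n)%nat -> l j (dev_flow lam j) + upd t i (dev_toll lam) j = lam).
  { intros j Hj. unfold dev_flow, upd, dev_toll. destruct (Nat.eq_dec j i) as [->|].
    - ring.
    - rewrite (proj2 (Hrival j Hj)). ring. }
  split; [|split].
  - intros j Hj. unfold dev_flow. destruct (Nat.eq_dec j i); auto.
    left; apply Hrival; auto.
  - rewrite (sumR_pick n _ i i_lt_n).
    rewrite (sumR_except_ext n i _ (rival_flow lam)).
    + unfold dev_flow, own_flow. destruct (Nat.eq_dec i i); [ring | lia].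
    + intros j _ Hji. unfold dev_flow. destruct (Nat.eq_dec j i); [lia | auto].
  - intros j k Hj Hk _. rewrite (Hcost j Hj), (Hcost k Hk). lra.
Qed.

Lemma dev_profit_le_near0 :
  near0 (fun h => 0 <= dev_toll (cost_level + h) -> below_cap c (dev_toll (cost_level + h)) ->
                  dev_profit (cost_level + h) <= t i * x i).
Proof.
  destruct t_in_T as [_ Hbest].
  apply (near0_impl (fun h =>
      (forall j, (j < n)%nat -> 0 < rival_flow (cost_level + h) j /\
                 l j (rival_flow (cost_level + h) j) = cost_level + h - t j) /\
      Rabs (own_flow (cost_level + h) - own_flow cost_level) < x i)).
  - intros h [Hrival Hown] Htoll Hcap.
    rewrite own_flow_level in Hown. apply Rabs_def2 in Hown.
    pose proof (Hbest i _ i_lt_n Htoll Hcap x _ x_wardrop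
                  (wardrop_dev_flow _ Hrival ltac:(lra))) as Hle.
    unfold dev_flow in Hle. destruct (Nat.eq_dec i i); [exact Hle | lia].
  - apply near0_and; [apply rival_flow_near0|].
    apply (derivable_pt_lim_near0_close _ _ _ _ derivable_pt_lim_own_flow), x_pos; auto.
Qed.

Lemma dev_profit_slope_near0 :
  near0 (fun h => 0 <= dev_toll (cost_level + h) -> below_cap c (dev_toll (cost_level + h)) ->
                  rival_response * (toll_formula - t i) * h <= 0).
Proof.
  destruct (Req_dec (rival_response * (toll_formula - t i)) 0) as [Hzero|Hslope].
  { exists 1; split; [lra|]. intros h _ _ _ _. rewrite Hzero. lra. }
  refine (near0_impl _ _ _ (near0_and _ _ dev_profit_le_near0
    (derivable_pt_lim_near0_sign _ _ _ derivable_pt_lim_dev_profit Hslope))).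
  intros h [Hle [Hup _]] Htoll Hcap.
  destruct (Rle_or_lt (rival_response * (toll_formula - t i) * h) 0) as [|Hpos]; auto.
  specialize (Hup Hpos). specialize (Hle Htoll Hcap).
  unfold dev_profit at 1 in Hup. rewrite dev_toll_level, own_flow_level in Hup. lra.
Qed.

Lemma dev_toll_slope_pos : 0 < 1 + dl i (x i) * rival_response.
Proof. pose proof rival_response_pos. pose proof (dl_pos i i_lt_n). nra. Qed.

Lemma formula_le_toll :
  (match c with Some c0 => t i < c0 | None => True end) -> toll_formula <= t i.
Proof.
  intros Hcap. destruct t_in_T as [Hadm _]. destruct (Hadm i i_lt_n) as [Hti _].
  set (tol := match c with Some c0 => c0 - t i | None => 1 end).
  assert (Htol : 0 < tol) by (unfold tol; destruct c; lra).
  destruct (near0_pos _ (near0_and _ _ dev_profit_slope_near0 (near0_and _ _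
     (derivable_pt_lim_near0_sign _ _ _ derivable_pt_lim_dev_toll
        (Rgt_not_eq _ _ dev_toll_slope_pos))
     (derivable_pt_lim_near0_close _ _ _ _ derivable_pt_lim_dev_toll Htol))))
    as [h [Hh [Hslope [[Htoll _] Hclose]]]].
  rewrite dev_toll_level in Htoll, Hclose. apply Rabs_def2 in Hclose.
  assert (Hup : t i < dev_toll (cost_level + h))
    by (apply Htoll; pose proof dev_toll_slope_pos; nra).
  assert (Hnonpos : rival_response * (toll_formula - t i) <= 0).
  { enough (rival_response * (toll_formula - t i) * h <= 0) by nra.
    apply Hslope; [lra|]. unfold tol in Hclose. destruct c; simpl; auto. lra. }
  pose proof rival_response_pos. nra.
Qed.

Lemma toll_le_formula : t i <= toll_formula.
Proof.
  pose proof toll_formula_pos. destruct t_in_T as [Hadm _].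
  destruct (Hadm i i_lt_n) as [[Hti|Hti] Hcap]; [|lra].
  destruct (near0_neg _ (near0_and _ _ dev_profit_slope_near0 (near0_and _ _
     (derivable_pt_lim_near0_sign _ _ _ derivable_pt_lim_dev_toll
        (Rgt_not_eq _ _ dev_toll_slope_pos))
     (derivable_pt_lim_near0_close _ _ _ _ derivable_pt_lim_dev_toll Hti))))
    as [h [Hh [Hslope [[_ Htoll] Hclose]]]].
  rewrite dev_toll_level in Htoll, Hclose. apply Rabs_def2 in Hclose.
  assert (Hdown : dev_toll (cost_level + h) < t i)
    by (apply Htoll; pose proof dev_toll_slope_pos; nra).
  assert (Hnonneg : 0 <= rival_response * (toll_formula - t i)).
  { enough (rival_response * (toll_formula - t i) * h <= 0) by nra.
    apply Hslope; [lra|]. apply (below_cap_le c _ (t i)); [lra | auto]. }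
  pose proof rival_response_pos. nra.
Qed.

End Deviation.

Theorem mainTheorem4 (n : nat) (l dl : nat -> R -> R) (c : option R)
  (t : nat -> R) :
  (2 <= n)%nat ->
  (forall i, (i < n)%nat -> in_Lc (l i) (dl i)) ->
  (match c with Some c0 => 0 <= c0 | None => True end) ->
  in_T n l c t ->
  forall x : nat -> R, wardrop n l t x ->
  (forall i, (i < n)%nat -> 0 < x i) ->
  forall i, (i < n)%nat ->
    t i = min_cap
      ((dl i (x i) +
        / sumR n (fun j => if Nat.eq_dec j i then 0 else / dl j (x j))) * x i) c.
Proof.
  intros Hn Hl _ Ht x Hx Hxpos i Hi.
  change (t i = min_cap (toll_formula n dl x i) c).
  pose proof (toll_le_formula n l dl c t x i Hn Hl Ht Hx Hxpos Hi) as Hle.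
  pose proof (formula_le_toll n l dl c t x i Hn Hl Ht Hx Hxpos Hi) as Hge.
  destruct (proj1 Ht i Hi) as [_ Hcap].
  destruct c as [c0|]; simpl in *.
  - destruct (Rle_lt_or_eq _ _ Hcap) as [Hlt|Heq].
    + rewrite Rmin_left; specialize (Hge Hlt); lra.
    + rewrite Rmin_right; lra.
  - specialize (Hge I). lra.
Qed.
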